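(* Let $A$ be a two-dimensional evolution algebra over a field $\mathbb{K}$ with $A^2=A$. Then the Lie algebra $\mathrm{Der}(A)$ of derivations of $A$ is zero, except when $\mathrm{char}(\mathbb{K})=3$ and $A\cong A_{2,\alpha}$ for some $\alpha\in\mathbb{K}^\times$. If $\mathrm{char}(\mathbb{K})=3$, then $\mathrm{Der}(A_{2,\alpha})=\{d_a : a\in\mathbb{K}\}$, where, with respect to a natural basis $\{e_1,e_2\}$ with $e_1^2=e_2$, $e_2^2=\alpha e_1$, the map $d_a$ is given by $d_a(re_1+se_2)=are_1-ase_2$; and $\mathrm{Der}(A)=0$ whenever $A$ is not isomorphic to any $A_{2,\alpha}$.
   Context: An evolution algebra over $\mathbb{K}$ is a $\mathbb{K}$-algebra with a basis $\{e_i\}$ (natural basis) such that $e_ie_j=0$ for $i\neq j$. $A_{2,\alpha}$ ($\alpha\in\mathbb{K}^\times$) is the evolution algebra with natural basis $\{e_1,e_2\}$, $e_1^2=e_2$, $e_2^2=\alpha e_1$. A derivation is a linear map $d$ with $d(xy)=d(x)y+xd(y)$. *)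

From HB Require Import structures.
From mathcomp Require Import all_boot all_order all_algebra.
Set Implicit Arguments. Unset Strict Implicit. Unset Printing Implicit Defensive.
Import Order.TTheory GRing.Theory.
Local Open Scope ring_scope.

(* A two-dimensional K-algebra is modelled (up to isomorphism) as K^2 = 'rV[K]_2
   with a multiplication m; linear maps act on the right by matrices. *)
Definition vec2 (K : fieldType) := 'rV[K]_2.

Definition bilinear_mul (K : fieldType) (m : vec2 K -> vec2 K -> vec2 K) : Prop :=
  (forall (a : K) x y z, m (a *: x + y) z = a *: m x z + m y z) /\
  (forall (a : K) x y z, m z (a *: x + y) = a *: m z x + m z y).

Definition e1 (K : fieldType) : vec2 K := delta_mx 0 0.
Definition e2 (K : fieldType) : vec2 K := delta_mx 0 1.

Definition is_evolution (K : fieldType) (m : vec2 K -> vec2 K -> vec2 K) : Prop :=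
  exists b1 b2 : vec2 K,
    (forall r s : K, r *: b1 + s *: b2 = 0 -> r = 0 /\ s = 0) /\
    m b1 b2 = 0 /\ m b2 b1 = 0.

Definition square_full (K : fieldType) (m : vec2 K -> vec2 K -> vec2 K) : Prop :=
  forall z : vec2 K, exists s : seq (vec2 K * vec2 K),
    z = \sum_(p <- s) m p.1 p.2.

Definition is_derivation (K : fieldType) (m : vec2 K -> vec2 K -> vec2 K)
  (D : 'M[K]_2) : Prop :=
  forall x y : vec2 K, m x y *m D = m (x *m D) y + m x (y *m D).

(* The evolution algebra A_{2,alpha}: natural basis e1, e2 with
   e1^2 = e2, e2^2 = alpha e1, e1 e2 = e2 e1 = 0. *)
Definition A2mul (K : fieldType) (alpha : K) (x y : vec2 K) : vec2 K :=
  (alpha * (x 0 1 * y 0 1)) *: e1 K + (x 0 0 * y 0 0) *: e2 K.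

Definition alg_iso (K : fieldType) (m m' : vec2 K -> vec2 K -> vec2 K) : Prop :=
  exists P : 'M[K]_2, P \in unitmx /\
    forall x y : vec2 K, m x y *m P = m' (x *m P) (y *m P).

From HB Require Import structures.
From mathcomp Require Import all_boot all_order all_algebra.
From mathcomp Require Import ring.
Import Order.TTheory GRing.Theory.
Local Open Scope ring_scope.

(* In a natural basis e1, e2 write e_i^2 = sum_j c_ij e_j.  Since A = A^2 is
   spanned by e1^2 and e2^2, the matrix C = (c_ij) is invertible.  Applying a
   derivation D to e1 e2 = 0 then forces D to be diagonal, D = diag(d1, d2), and
   D(e_i^2) = 2 d_i e_i^2 reads c_ij (d_j - 2 d_i) = 0.  If d1 = 0, invertibility
   of C gives d2 = 0.  Otherwise c_11 = 0, hence c_12, c_21 <> 0, so d2 = 2 d1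
   and d1 = 2 d2: then 3 d1 = 0, the characteristic is 3, c_22 = 0, and the
   basis e1, e1^2 = c_12 e2 identifies A with A_{2,alpha}, alpha = c_12^2 c_21.
   For A_{2,alpha} in characteristic 3 the equations say exactly d2 = -d1. *)

Section Evolution2.
Context {K : fieldType}.
Implicit Types (x y u v : vec2 K) (A C D : 'M[K]_2).

Lemma ord2P (i : 'I_2) : i = 0 \/ i = 1.
Proof. by case: i => [[|[|//]] ?]; [left | right]; apply: val_inj. Qed.

Lemma big_ord2 (R : Type) (idx : R) (op : Monoid.law idx) (F : 'I_2 -> R) :
  \big[op/idx]_(i < 2) F i = op (F 0) (F 1).
Proof.
rewrite !big_ord_recl big_ord0 Monoid.mulm1.
by have -> : lift ord0 ord0 = 1 :> 'I_2 by apply: val_inj.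
Qed.

Lemma mulmx_row2E x A j : (x *m A) 0 j = x 0 0 * A 0 j + x 0 1 * A 1 j.
Proof. by rewrite !mxE big_ord2. Qed.

Lemma row2_eq x y : x 0 0 = y 0 0 -> x 0 1 = y 0 1 -> x = y.
Proof. by move=> h0 h1; apply/rowP => j; case: (ord2P j) => ->. Qed.

Lemma det_mx22 A : \det A = A 0 0 * A 1 1 - A 0 1 * A 1 0.
Proof.
have lift10 : lift 1 0 = 0 :> 'I_2 by apply: val_inj.
have lift01 : lift 0 0 = 1 :> 'I_2 by apply: val_inj.
rewrite (expand_det_row _ 0) big_ord2 /cofactor !det_mx11 !mxE lift10 lift01 /=.
ring.
Qed.

Definition mxrows2 u v : 'M[K]_2 := \matrix_i (if i == 0 then u else v).

Lemma mul_mxrows2 x u v : x *m mxrows2 u v = x 0 0 *: u + x 0 1 *: v.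
Proof. by rewrite mulmx_sum_row big_ord2 !rowK. Qed.

Lemma mxrows2_unit u v :
  (forall r s : K, r *: u + s *: v = 0 -> r = 0 /\ s = 0) -> mxrows2 u v \in unitmx.
Proof.
move=> free_uv; rewrite unitmxE unitfE; apply/det0P => -[w /negP nz_w].
rewrite mul_mxrows2 => /free_uv[w0 w1]; by apply/nz_w/eqP/row2_eq; rewrite mxE.
Qed.

(* The product of [m] written in the basis formed by the rows of [B]. *)
Definition conj_mul B (m : vec2 K -> vec2 K -> vec2 K) x y :=
  m (x *m B) (y *m B) *m invmx B.

Section ChangeOfBasis.
Context {m : vec2 K -> vec2 K -> vec2 K} {B : 'M[K]_2}.
Hypothesis B_unit : B \in unitmx.

Lemma bilinear_conj_mul : bilinear_mul m -> bilinear_mul (conj_mul B m).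
Proof.
by case=> mDl mDr; split=> a x y z; rewrite /conj_mul mulmxDl -scalemxAl
  ?mDl ?mDr mulmxDl scalemxAl.
Qed.

Lemma square_full_conj_mul : square_full m -> square_full (conj_mul B m).
Proof.
move=> m_full z; have [s zB] := m_full (z *m B).
exists [seq (p.1 *m invmx B, p.2 *m invmx B) | p <- s].
rewrite -[z](mulmxK B_unit) zB big_map mulmx_suml; apply: eq_bigr => p _.
by rewrite /conj_mul !mulmxKV.
Qed.

Lemma derivation_conj_mul D :
  is_derivation m D -> is_derivation (conj_mul B m) (B *m D *m invmx B).
Proof.
move=> m_der x y; have xBD z : z *m (B *m D *m invmx B) *m B = z *m B *m D.
  by rewrite !mulmxA mulmxKV.
by rewrite /conj_mul !xBD !mulmxA mulmxKV // m_der mulmxDl.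
Qed.

Lemma alg_iso_conj_mul : alg_iso m (conj_mul B m).
Proof.
exists (invmx B); split; first by rewrite unitmx_inv.
by move=> x y; rewrite /conj_mul !mulmxKV.
Qed.

End ChangeOfBasis.

Lemma alg_iso_trans (m1 m2 m3 : vec2 K -> vec2 K -> vec2 K) :
  alg_iso m1 m2 -> alg_iso m2 m3 -> alg_iso m1 m3.
Proof.
move=> [P [P_unit m12]] [Q [Q_unit m23]]; exists (P *m Q).
by rewrite unitmx_mul P_unit Q_unit; split=> // x y; rewrite !mulmxA m12 m23.
Qed.

Lemma evolution_std_basis (m : vec2 K -> vec2 K -> vec2 K) : is_evolution m ->
  exists2 B, B \in unitmx &
    conj_mul B m (e1 K) (e2 K) = 0 /\ conj_mul B m (e2 K) (e1 K) = 0.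
Proof.
move=> [b1 [b2 [free_b [b12 b21]]]]; exists (mxrows2 b1 b2).
  exact: mxrows2_unit.
have e1B : e1 K *m mxrows2 b1 b2 = b1.
  by rewrite mul_mxrows2 !mxE /= scale1r scale0r addr0.
have e2B : e2 K *m mxrows2 b1 b2 = b2.
  by rewrite mul_mxrows2 !mxE /= scale1r scale0r add0r.
by rewrite /conj_mul e1B e2B b12 b21 !mul0mx.
Qed.

Lemma alg_iso_A2 (m : vec2 K -> vec2 K -> vec2 K) (a b : K) : a != 0 ->
  (forall x y, m x y = (b * (x 0 1 * y 0 1)) *: e1 K + (a * (x 0 0 * y 0 0)) *: e2 K) ->
  alg_iso m (A2mul (a ^+ 2 * b)).
Proof.
move=> nz_a mE; exists (diag_mx (\row_j (if j == 0 then 1 else a^-1))); split.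
  by rewrite unitmxE det_diag big_ord2 !mxE /= mul1r unitfE invr_eq0.
move=> x y; rewrite !mul_mx_diag mE.
by apply: row2_eq; rewrite !mxE /=; field.
Qed.

Definition struct_mx (m : vec2 K -> vec2 K -> vec2 K) : 'M[K]_2 :=
  \matrix_i m 'e_i 'e_i.

Section StdEvolution.
Context {m : vec2 K -> vec2 K -> vec2 K}.
Hypotheses (m_bilin : bilinear_mul m)
  (m12 : m (e1 K) (e2 K) = 0) (m21 : m (e2 K) (e1 K) = 0).
Local Notation C := (struct_mx m).

Lemma bmul0l y : m 0 y = 0.
Proof. by have := m_bilin.1 (-1) 0 0 y; rewrite scaler0 add0r scaleN1r addNr. Qed.

Lemma bmul0r x : m x 0 = 0.
Proof. by have := m_bilin.2 (-1) 0 0 x; rewrite scaler0 add0r scaleN1r addNr. Qed.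

Lemma bmulZl a x y : m (a *: x) y = a *: m x y.
Proof. by have := m_bilin.1 a x 0 y; rewrite !addr0 bmul0l addr0. Qed.

Lemma bmulZr a x y : m x (a *: y) = a *: m x y.
Proof. by have := m_bilin.2 a y 0 x; rewrite !addr0 bmul0r addr0. Qed.

Lemma bmulDl x x' y : m (x + x') y = m x y + m x' y.
Proof. by have := m_bilin.1 1 x x' y; rewrite !scale1r. Qed.

Lemma bmulDr x y y' : m x (y + y') = m x y + m x y'.
Proof. by have := m_bilin.2 1 y y' x; rewrite !scale1r. Qed.

Lemma evol_mulE x y : m x y = (\row_k (x 0 k * y 0 k)) *m C.
Proof.
rewrite mulmx_sum_row big_ord2 !rowK !mxE.
rewrite {1}(row_sum_delta x) {1}(row_sum_delta y) !big_ord2.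
rewrite !bmulDl !bmulDr !bmulZl !bmulZr m12 m21 !scaler0 addr0 add0r !scalerA.
by rewrite [x 0 1 * _]mulrC [x 0 0 * _]mulrC.
Qed.

Lemma evol_mul_coord x y j :
  m x y 0 j = x 0 0 * y 0 0 * C 0 j + x 0 1 * y 0 1 * C 1 j.
Proof. by rewrite evol_mulE mulmx_row2E !mxE. Qed.

Lemma struct_mx_unit : square_full m -> C \in unitmx.
Proof.
move=> m_full; rewrite -row_full_unit -sub1mx; apply/row_subP => i.
have [s ->] := m_full (row i 1%:M).
under eq_bigr do rewrite evol_mulE.
by rewrite -mulmx_suml submxMl.
Qed.

Lemma evol_derivationP D : C \in unitmx ->
  is_derivation m D <->
  exists2 d : 'rV_2, D = diag_mx d &
    forall i, row i C *m diag_mx d = (d 0 i *+ 2) *: row i C.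
Proof.
move=> C_unit; split=> [m_der | [d -> eigen] x y]; last first.
  rewrite [x *m _]mul_mx_diag [y *m _]mul_mx_diag !evol_mulE -mulmxDl.
  rewrite !(mulmx_sum_row _ C) mulmx_suml; apply: eq_bigr => k _.
  by rewrite -scalemxAl eigen scalerA !mxE; congr (_ *: _); ring.
have [D01 D10] : D 0 1 = 0 /\ D 1 0 = 0.
  (* [D] maps the relation [e1 e2 = 0] to [(D 1 0, D 0 1) *m C = 0]. *)
  have := m_der (e1 K) (e2 K); rewrite m12 mul0mx -!rowE !evol_mulE -mulmxDl.
  move/(congr1 (mulmx^~ (invmx C))); rewrite mulmxK // mul0mx => /rowP w0.
  have := w0 0; have := w0 1; rewrite !mxE /=.
  by rewrite mulr1 mul0r addr0 mulr0 add0r mul1r => /esym ? /esym.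
have [d Dd] : exists d, D = diag_mx d.
  exists (\row_i D i i); apply/matrixP => i j; rewrite !mxE.
  by case: (ord2P i) (ord2P j) => -> [] ->.
exists d => // i.
by rewrite -Dd rowK m_der -!rowE Dd row_diag_mx bmulZl bmulZr -scalerDl.
Qed.

Lemma evol_iso_A2 : C \in unitmx -> C 0 0 = 0 -> C 1 1 = 0 ->
  exists alpha, alpha != 0 /\ alg_iso m (A2mul alpha).
Proof.
rewrite unitmxE unitfE det_mx22 => + C00 C11.
rewrite C00 mul0r sub0r oppr_eq0 mulf_eq0 negb_or => /andP[C01 C10].
exists (C 0 1 ^+ 2 * C 1 0); split; first by rewrite mulf_neq0 ?expf_neq0.
apply: alg_iso_A2 => // x y.
by apply: row2_eq; rewrite !evol_mul_coord ?C00 ?C11 !mxE /=; ring.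
Qed.

End StdEvolution.

Lemma struct_mx_eigen_cases C (d : 'rV[K]_2) : C \in unitmx ->
  (forall i, row i C *m diag_mx d = (d 0 i *+ 2) *: row i C) ->
  d = 0 \/ [/\ 3%:R = 0 :> K, C 0 0 = 0 & C 1 1 = 0].
Proof.
rewrite unitmxE unitfE det_mx22 => detC eigen.
have weight i j : C i j * (d 0 j - d 0 i *+ 2) = 0.
  by move/rowP/(_ j): (eigen i); rewrite mul_mx_diag !mxE mulrBr => ->; ring.
have [d0 | nz_d0] := eqVneq (d 0 0) 0.
  left; apply: row2_eq; rewrite mxE //; apply: (mulIf detC); rewrite mul0r.
  transitivity (- C 0 0 * (C 1 1 * (d 0 1 - d 0 1 *+ 2))
                - C 1 0 * (C 0 1 * (d 0 1 - d 0 0 *+ 2))).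
    by rewrite d0; ring.
  by rewrite !weight !mulr0 subr0.
right.
have C00 : C 0 0 = 0.
  apply: (mulIf nz_d0); rewrite mul0r.
  by transitivity (- (C 0 0 * (d 0 0 - d 0 0 *+ 2))); [ring | rewrite weight oppr0].
move: detC; rewrite C00 mul0r sub0r oppr_eq0 mulf_eq0 negb_or => /andP[C01 C10].
have d10 : d 0 1 - d 0 0 *+ 2 = 0 by apply: (mulfI C01); rewrite weight mulr0.
have d01 : d 0 0 - d 0 1 *+ 2 = 0 by apply: (mulfI C10); rewrite weight mulr0.
have char3 : 3%:R = 0 :> K.
  apply: (mulIf nz_d0); rewrite mul0r.
  transitivity (- (d 0 0 - d 0 1 *+ 2 + (d 0 1 - d 0 0 *+ 2) *+ 2)); first by ring.
  by rewrite d01 d10 mul0rn addr0 oppr0.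
split=> //; apply: (mulIf nz_d0); rewrite mul0r.
transitivity (C 1 1 * (d 0 0 - d 0 1 *+ 2) - C 1 1 * (d 0 1 - d 0 1 *+ 2) *+ 2).
  by ring.
by rewrite d01 weight mulr0 mul0rn subr0.
Qed.

Lemma derivation_eq0_or_iso_A2 (m : vec2 K -> vec2 K -> vec2 K) D :
  bilinear_mul m -> is_evolution m -> square_full m -> is_derivation m D ->
  D = 0 \/ 3%:R = 0 :> K /\ exists alpha, alpha != 0 /\ alg_iso m (A2mul alpha).
Proof.
move=> m_bilin /evolution_std_basis[B B_unit [m12 m21]] m_full m_der.
have m'_bilin := bilinear_conj_mul (B := B) m_bilin.
have C_unit := struct_mx_unit m'_bilin m12 m21 (square_full_conj_mul B_unit m_full).
have /(evol_derivationP m'_bilin m12 m21 _ C_unit) [d D'E eigen] :=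
  derivation_conj_mul B_unit _ m_der.
have [d0 | [char3 C00 C11]] := struct_mx_eigen_cases _ _ C_unit eigen.
  left; rewrite -(mulKmx B_unit D) -(mulmxKV B_unit (B *m D)) D'E d0.
  by rewrite linear0 mul0mx mulmx0.
right; split=> //.
have [alpha [nz_alpha m'_iso]] := evol_iso_A2 m'_bilin m12 m21 C_unit C00 C11.
by exists alpha; split=> //; apply: alg_iso_trans (alg_iso_conj_mul B_unit) m'_iso.
Qed.

Lemma bilinear_A2mul (alpha : K) : bilinear_mul (A2mul alpha).
Proof. by split=> a x y z; apply: row2_eq; rewrite !mxE /=; ring. Qed.

Definition d_a (a : K) : 'M[K]_2 := diag_mx (\row_j (if j == 0 then a else - a)).

Lemma d_aP D a :
  (forall r s : K, (r *: e1 K + s *: e2 K) *m D = (a * r) *: e1 K - (a * s) *: e2 K)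
  <-> D = d_a a.
Proof.
have d_aE r s : (r *: e1 K + s *: e2 K) *m d_a a = (a * r) *: e1 K - (a * s) *: e2 K.
  by apply: row2_eq; rewrite mul_mx_diag !mxE /=; ring.
split=> [D_spec | -> //]; apply/row_matrixP => i; rewrite !rowE.
case: (ord2P i) => ->; [move: (D_spec 1 0) (d_aE 1 0) | move: (D_spec 0 1) (d_aE 0 1)].
  by rewrite scale1r scale0r addr0 => -> ->.
by rewrite scale1r scale0r add0r => -> ->.
Qed.

Lemma A2mul_derivationP (alpha : K) D : alpha != 0 ->
  is_derivation (A2mul alpha) D <->
  exists2 d : 'rV_2, D = diag_mx d & d 0 1 = d 0 0 *+ 2 /\ d 0 0 = d 0 1 *+ 2.
Proof.
move=> nz_alpha.
have A2_12 : A2mul alpha (e1 K) (e2 K) = 0 by apply: row2_eq; rewrite !mxE /=; ring.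
have A2_21 : A2mul alpha (e2 K) (e1 K) = 0 by apply: row2_eq; rewrite !mxE /=; ring.
have C_unit : struct_mx (A2mul alpha) \in unitmx.
  rewrite unitmxE unitfE det_mx22 !mxE /=.
  by rewrite (_ : _ - _ = - alpha) ?oppr_eq0 //; ring.
rewrite (evol_derivationP (bilinear_A2mul alpha) A2_12 A2_21 D C_unit).
split=> -[d -> Hd]; exists d => //.
  move/rowP/(_ 1): (Hd 0); move/rowP/(_ 0): (Hd 1).
  rewrite !mul_mx_diag !mxE /= !(mul0r, mulr0, mul1r, mulr1, addr0, add0r).
  by rewrite [alpha * _]mulrC => /(mulIf nz_alpha).
case: Hd => d1E d0E i; apply/rowP => j; rewrite mul_mx_diag !mxE /=.
case: (ord2P i) (ord2P j) => -> [] -> /=;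
  by rewrite !(mul0r, mulr0, mul1r, mulr1, addr0, add0r) // [alpha * _]mulrC d0E.
Qed.

Lemma char3_oppr (x : K) : 3%:R = 0 :> K -> - x = x *+ 2.
Proof. by move=> char3; apply: (addrI x); rewrite addrN -mulrS -mulr_natl char3 mul0r. Qed.

Lemma A2mul_derivation_char3 (alpha : K) D : 3%:R = 0 :> K -> alpha != 0 ->
  is_derivation (A2mul alpha) D <-> exists a, D = d_a a.
Proof.
move=> char3 nz_alpha; rewrite A2mul_derivationP //.
split=> [[d -> [d1E d0E]] | [a ->]].
  exists (d 0 0); congr diag_mx; apply: row2_eq; rewrite !mxE //=.
  by rewrite d1E char3_oppr.
exists (\row_j (if j == 0 then a else - a)) => //; rewrite !mxE /=.
by rewrite mulNrn -!char3_oppr ?opprK.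
Qed.

End Evolution2.

Theorem proposition5p3 (K : fieldType) (m : vec2 K -> vec2 K -> vec2 K) :
  bilinear_mul m -> is_evolution m -> square_full m ->
  (* Der(A) = 0 except when char K = 3 and A is isomorphic to some A_{2,alpha} *)
  (~ (3%N \in [pchar K] /\ exists alpha : K, alpha != 0 /\ alg_iso m (A2mul alpha)) ->
     forall D : 'M[K]_2, is_derivation m D -> D = 0) /\
  (* in characteristic 3, Der(A_{2,alpha}) = { d_a : a in K } *)
  (3%N \in [pchar K] -> forall alpha : K, alpha != 0 ->
     forall D : 'M[K]_2, is_derivation (A2mul alpha) D <->
       exists a : K, forall r s : K,
         (r *: e1 K + s *: e2 K) *m D = (a * r) *: e1 K - (a * s) *: e2 K) /\
  (* Der(A) = 0 whenever A is not isomorphic to any A_{2,alpha} *)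
  ((forall alpha : K, alpha != 0 -> ~ alg_iso m (A2mul alpha)) ->
     forall D : 'M[K]_2, is_derivation m D -> D = 0).
Proof.
move=> m_bilin m_evol m_full.
have der_cases D := derivation_eq0_or_iso_A2 m D m_bilin m_evol m_full.
split; [|split].
- move=> not_exceptional D /der_cases[// | [char3 iso]].
  by case: not_exceptional; rewrite inE /= char3 eqxx.
- move=> /pcharf0 char3 alpha nz_alpha D; rewrite A2mul_derivation_char3 //.
  by split=> -[a Da]; exists a; apply/d_aP.
- move=> not_iso D /der_cases[// | [_ [alpha [nz_alpha iso]]]].
  by case: (not_iso alpha nz_alpha).
Qed.
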